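(* Let $r\in[0,\pi/2)$. Suppose that for all $i\ne j$ and all $t\ge 0$, $$\omega_{i}(t)-\omega_{j}(t)-[a_{ij}(t)+a_{ji}(t)]\sin r-\sum_{k\notin \Lambda_{ij}(t),\,k\ne i,j}\big([a_{ik}(t)]^{-}+[a_{jk}(t)]^{-}\big)\sin r-\sum_{k\in \Lambda_{ij}(t)}\min\{a_{ik}(t),a_{jk}(t)\}\sin r<0,$$ where $\Lambda_{ij}(t)=\{k:\ a_{ik}(t)>0\text{ and }a_{jk}(t)>0\}$ and $[z]^{-}=\min\{z,0\}$. Then the set $\mathscr A^{r}$ is invariant for system (TVKR).
   Context: Consider $m\ge 2$ phase oscillators $\theta=(\theta_1,\dots,\theta_m)\in\mathbb R^m$ governed by (TVKR): $\dot\theta_i=\omega_i(t)+\sum_{j=1}^m a_{ij}(t)\sin(\theta_j-\theta_i)$, $i=1,\dots,m$, where $\omega_i$ and $a_{ij}$ are real-valued, piecewise continuous, bounded functions of $t\ge 0$ with $a_{ii}\equiv 0$; the coupling coefficients $a_{ij}$ may take negative values. Write $\theta_{ij}=\theta_i-\theta_j$ for the phase differences (PDs). For $r\in[0,\pi/2)$, $\mathscr A^{r}=\{(\theta_{ij})_{i>j}\in\mathbb R^{m(m-1)/2}: |\theta_{ij}|\le r \text{ for all } i>j\}$. $\mathscr A^r$ is called invariant for (TVKR) if every solution whose phase differences lie in $\mathscr A^r$ at $t=0$ has phase differences in $\mathscr A^r$ for all $t\ge 0$. *)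

From Stdlib Require Import Reals Lra.
Open Scope R_scope.

Fixpoint rsum (n : nat) (f : nat -> R) : R :=
  match n with O => 0 | S n' => rsum n' f + f n' end.

Definition negpart (z : R) : R := Rmin z 0.

Definition piecewise_continuous (f : R -> R) : Prop :=
  forall T : R, exists l : list R,
    forall t, 0 <= t <= T -> ~ List.In t l -> continuity_pt f t.

Definition bounded_on_nonneg (f : R -> R) : Prop :=
  exists M : R, forall t, 0 <= t -> Rabs (f t) <= M.

Definition tvkr_rhs (m : nat) (omega : nat -> R -> R) (a : nat -> nat -> R -> R)
  (theta : nat -> R -> R) (i : nat) (s : R) : R :=
  omega i s + rsum m (fun j => a i j s * sin (theta j s - theta i s)).

(* theta is a solution of (TVKR) on [0,oo), in integral (Caratheodory) form *)
Definition is_solution (m : nat) (omega : nat -> R -> R) (a : nat -> nat -> R -> R)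
  (theta : nat -> R -> R) : Prop :=
  forall i, (i < m)%nat -> forall t, 0 <= t ->
    exists pr : Riemann_integrable (tvkr_rhs m omega a theta i) 0 t,
      theta i t = theta i 0 + RiemannInt pr.

Definition in_Lambda (a : nat -> nat -> R -> R) (i j k : nat) (t : R) : Prop :=
  0 < a i k t /\ 0 < a j k t.

Definition lam_term (a : nat -> nat -> R -> R) (i j k : nat) (t : R) : R :=
  match Rlt_dec 0 (a i k t), Rlt_dec 0 (a j k t) with
  | left _, left _ => Rmin (a i k t) (a j k t)
  | _, _ => 0
  end.

Definition nonlam_term (a : nat -> nat -> R -> R) (i j k : nat) (t : R) : R :=
  if (Nat.eqb k i || Nat.eqb k j)%bool then 0 else
  match Rlt_dec 0 (a i k t), Rlt_dec 0 (a j k t) with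
  | left _, left _ => 0
  | _, _ => negpart (a i k t) + negpart (a j k t)
  end.

Definition invariant_Ar (m : nat) (omega : nat -> R -> R) (a : nat -> nat -> R -> R)
  (r : R) : Prop :=
  forall theta : nat -> R -> R, is_solution m omega a theta ->
    (forall i j, (j < i < m)%nat -> Rabs (theta i 0 - theta j 0) <= r) ->
    forall t, 0 <= t -> forall i j, (j < i < m)%nat -> Rabs (theta i t - theta j t) <= r.

From Stdlib Require Import Reals Lra Lia List Classical.
Open Scope R_scope.

(* If some phase difference left [-r, r], pick a level [y] with r < y < pi/2 that
   avoids the finitely many values the phase differences take at the
   discontinuity times of the coefficients, and run a real induction on
   "all phase differences are at most y".  When a pair (k, l) reaches y, every
   other phase lies between theta_l and theta_k, so each interaction term is
   bounded by the summands of the hypothesis with sin y in place of sin r; the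
   hypothesis for (k, l) and (l, k) then makes the velocity gap negative at that
   time, and, the coefficients being continuous there, the pair cannot cross y. *)

Lemma rsum_ext n f g : (forall j, (j < n)%nat -> f j = g j) -> rsum n f = rsum n g.
Proof.
  induction n as [|n IH]; intros Hfg; simpl; [reflexivity|].
  rewrite IH by (intros; apply Hfg; lia). rewrite Hfg by lia. reflexivity.
Qed.

Lemma rsum_le n f g : (forall j, (j < n)%nat -> f j <= g j) -> rsum n f <= rsum n g.
Proof.
  induction n as [|n IH]; intros Hfg; simpl; [lra|].
  assert (rsum n f <= rsum n g) by (apply IH; intros; apply Hfg; lia).
  assert (f n <= g n) by (apply Hfg; lia). lra.
Qed.

Lemma rsum_plus n f g : rsum n (fun j => f j + g j) = rsum n f + rsum n g.
Proof. induction n as [|n IH]; simpl; [ring|]. rewrite IH; ring. Qed.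

Lemma rsum_minus n f g : rsum n (fun j => f j - g j) = rsum n f - rsum n g.
Proof. induction n as [|n IH]; simpl; [ring|]. rewrite IH; ring. Qed.

Lemma rsum_mulr n f c : rsum n (fun j => f j * c) = rsum n f * c.
Proof. induction n as [|n IH]; simpl; [ring|]. rewrite IH; ring. Qed.

Lemma rsum_zero n f : (forall j, (j < n)%nat -> f j = 0) -> rsum n f = 0.
Proof.
  intros Hf. rewrite (rsum_ext n f (fun _ => 0)) by exact Hf.
  clear Hf. induction n as [|n IH]; simpl; [reflexivity|]. rewrite IH; ring.
Qed.

Lemma rsum_delta n l c : (l < n)%nat -> rsum n (fun j => if Nat.eqb j l then c else 0) = c.
Proof.
  induction n as [|n IH]; intros Hl; [lia|]. simpl.
  destruct (Nat.eqb_spec n l) as [<-|Hnl].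
  - rewrite rsum_zero; [ring|]. intros j Hj. destruct (Nat.eqb_spec j n); [lia|reflexivity].
  - rewrite IH by lia. ring.
Qed.

Lemma rsum_continuity_pt n (F : nat -> R -> R) x :
  (forall j, (j < n)%nat -> continuity_pt (F j) x) ->
  continuity_pt (fun t => rsum n (fun j => F j t)) x.
Proof.
  induction n as [|n IH]; simpl; intros HF.
  - apply continuity_pt_const. intros u v; reflexivity.
  - apply (continuity_pt_plus (fun t => rsum n (fun j => F j t)) (F n)).
    + apply IH; intros; apply HF; lia.
    + apply HF; lia.
Qed.

Lemma sin_subadditive x y : 0 <= sin x -> 0 <= sin y -> sin (x + y) <= sin x + sin y.
Proof.
  intros Hx Hy. rewrite sin_plus.
  pose proof (COS_bound x). pose proof (COS_bound y). nra.
Qed.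

Lemma sin_le_on_quarter x y : 0 <= x <= y -> y <= PI / 2 -> 0 <= sin x <= sin y.
Proof.
  intros Hxy Hy. pose proof PI_RGT_0. split.
  - apply sin_ge_0; lra.
  - apply sin_incr_1; lra.
Qed.

Lemma neg_mul_le_negpart_mul c p q : 0 <= p <= q -> - (c * p) <= - (negpart c * q).
Proof. unfold negpart. intros Hpq. apply Rmin_case_strong; intros; nra. Qed.

Lemma neg_mul_le_min_mul c d p q z : 0 < c -> 0 < d -> 0 <= p -> 0 <= q -> z <= p + q ->
  - (c * p) - d * q <= - (Rmin c d * z).
Proof. intros. apply Rmin_case_strong; intros; nra. Qed.

Definition coupling (m : nat) (a : nat -> nat -> R -> R) (i j : nat) (t : R) : R :=
  a i j t + a j i t + rsum m (fun k => nonlam_term a i j k t)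
  + rsum m (fun k => lam_term a i j k t).

Lemma coupling_sym m a i j t : coupling m a i j t = coupling m a j i t.
Proof.
  unfold coupling.
  rewrite (rsum_ext m (fun k => nonlam_term a i j k t) (fun k => nonlam_term a j i k t)).
  2:{ intros k _. unfold nonlam_term. rewrite Bool.orb_comm.
      destruct (_ || _)%bool; [reflexivity|].
      destruct (Rlt_dec 0 (a i k t)), (Rlt_dec 0 (a j k t)); lra. }
  rewrite (rsum_ext m (fun k => lam_term a i j k t) (fun k => lam_term a j i k t)).
  2:{ intros k _. unfold lam_term.
      destruct (Rlt_dec 0 (a i k t)), (Rlt_dec 0 (a j k t)); try reflexivity.
      apply Rmin_comm. }
  ring.
Qed.

Lemma interaction_term_le a (phi : nat -> R) k l j t y :
  k <> l -> a k k t = 0 -> a l l t = 0 -> y <= PI / 2 ->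
  phi k - phi l = y -> phi k - phi j <= y -> phi j - phi l <= y ->
  a k j t * sin (phi j - phi k) - a l j t * sin (phi j - phi l) <=
  ((if Nat.eqb j l then a k l t else 0) + (if Nat.eqb j k then a l k t else 0)
   + nonlam_term a k l j t + lam_term a k l j t) * - sin y.
Proof.
  intros Hkl Hkk Hll Hy Hkl_y Hkj Hjl.
  set (x := phi j - phi l).
  replace (phi j - phi k) with (- (y - x)) by (unfold x; lra). rewrite sin_neg.
  destruct (sin_le_on_quarter x y ltac:(unfold x; lra) Hy) as [Sx Sxy].
  destruct (sin_le_on_quarter (y - x) y ltac:(unfold x; lra) Hy) as [Syx Syxy].
  unfold nonlam_term, lam_term.
  destruct (Nat.eqb_spec j l) as [->|Hjl'].
  - destruct (Nat.eqb_spec l k) as [|_]; [congruence|].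
    replace x with 0 by (unfold x; ring). rewrite Rminus_0_r, sin_0, Hll.
    destruct (Rlt_dec 0 (a k l t)), (Rlt_dec 0 0); simpl; lra.
  - destruct (Nat.eqb_spec j k) as [->|Hjk'].
    + replace x with y by (unfold x; lra). rewrite Rminus_diag, sin_0, Hkk.
      destruct (Rlt_dec 0 0), (Rlt_dec 0 (a l k t)); simpl; lra.
    + destruct (Nat.eqb_spec j k), (Nat.eqb_spec j l); try congruence. simpl.
      assert (Ssum : sin y <= sin (y - x) + sin x).
      { replace y with ((y - x) + x) at 1 by ring. apply sin_subadditive; lra. }
      destruct (Rlt_dec 0 (a k j t)), (Rlt_dec 0 (a l j t)).
      * pose proof (neg_mul_le_min_mul (a k j t) (a l j t) (sin (y - x)) (sin x) (sin y)).
        lra.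
      * pose proof (neg_mul_le_negpart_mul (a k j t) (sin (y - x)) (sin y)).
        pose proof (neg_mul_le_negpart_mul (a l j t) (sin x) (sin y)). lra.
      * pose proof (neg_mul_le_negpart_mul (a k j t) (sin (y - x)) (sin y)).
        pose proof (neg_mul_le_negpart_mul (a l j t) (sin x) (sin y)). lra.
      * pose proof (neg_mul_le_negpart_mul (a k j t) (sin (y - x)) (sin y)).
        pose proof (neg_mul_le_negpart_mul (a l j t) (sin x) (sin y)). lra.
Qed.

Lemma interaction_gap_le m a (phi : nat -> R) k l t y :
  (k < m)%nat -> (l < m)%nat -> k <> l -> a k k t = 0 -> a l l t = 0 -> y <= PI / 2 ->
  phi k - phi l = y -> (forall j, (j < m)%nat -> phi k - phi j <= y /\ phi j - phi l <= y) ->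
  rsum m (fun j => a k j t * sin (phi j - phi k)) - rsum m (fun j => a l j t * sin (phi j - phi l))
  <= coupling m a k l t * - sin y.
Proof.
  intros Hk Hl Hkl Hkk Hll Hy Hkl_y Hpin.
  rewrite <- rsum_minus.
  eapply Rle_trans.
  { apply rsum_le. intros j Hj. destruct (Hpin j Hj).
    apply (interaction_term_le a phi k l j t y); assumption. }
  rewrite rsum_mulr, !rsum_plus, !rsum_delta by assumption.
  unfold coupling. lra.
Qed.

Definition eventually_right (s : R) (P : R -> Prop) : Prop :=
  exists d, 0 < d /\ forall u, s <= u <= s + d -> P u.

Lemma eventually_right_forall n s (P : nat -> R -> Prop) :
  (forall i, (i < n)%nat -> eventually_right s (P i)) ->
  eventually_right s (fun u => forall i, (i < n)%nat -> P i u).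
Proof.
  induction n as [|n IH]; intros HP.
  - exists 1. split; [lra|]. intros; lia.
  - destruct IH as [d [Hd Hu]]; [intros; apply HP; lia|].
    destruct (HP n ltac:(lia)) as [e [He Hn]].
    exists (Rmin d e). split; [apply Rmin_glb_lt; lra|].
    intros u Hu' i Hi. pose proof (Rmin_l d e). pose proof (Rmin_r d e).
    destruct (Nat.eq_dec i n) as [->|].
    + apply Hn; lra.
    + apply Hu; [lra|lia].
Qed.

Lemma real_induction (Q : R -> Prop) (t : R) :
  0 <= t -> Q 0 ->
  (forall s, 0 < s <= t -> (forall u, 0 <= u < s -> Q u) -> Q s) ->
  (forall s, 0 <= s < t -> (forall u, 0 <= u <= s -> Q u) -> eventually_right s Q) ->
  forall u, 0 <= u <= t -> Q u.
Proof.
  intros Ht HQ0 Hclosed Hopen.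
  set (E := fun tau => 0 <= tau <= t /\ forall u, 0 <= u <= tau -> Q u).
  destruct (completeness E) as [s [Hub Hlub]].
  { exists t. intros tau [Htau _]. lra. }
  { exists 0. split; [lra|]. intros u Hu. replace u with 0 by lra. exact HQ0. }
  assert (Hs0 : 0 <= s).
  { apply Hub. split; [lra|]. intros u Hu. replace u with 0 by lra. exact HQ0. }
  assert (Hst : s <= t) by (apply Hlub; intros tau [Htau _]; lra).
  assert (Hbelow : forall u, 0 <= u < s -> Q u).
  { intros u Hu. apply NNPP. intros HnQ.
    assert (s <= u); [|lra].
    apply Hlub. intros tau [_ HQtau]. apply Rnot_lt_le. intros Hut. apply HnQ, HQtau. lra. }
  assert (Hupto : forall u, 0 <= u <= s -> Q u).
  { intros u Hu. destruct (Rlt_le_dec u s); [apply Hbelow; lra|].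
    replace u with s by lra.
    destruct (Req_dec s 0) as [->|Hs]; [exact HQ0|]. apply Hclosed; [lra|exact Hbelow]. }
  destruct (Rlt_le_dec s t) as [Hlt|Hge]; [|intros u Hu; apply Hupto; lra].
  exfalso.
  destruct (Hopen s ltac:(lra) Hupto) as [d [Hd Hafter]].
  assert (Htau : E (Rmin (s + d) t)).
  { pose proof (Rmin_l (s + d) t). pose proof (Rmin_r (s + d) t).
    split; [split; [apply Rmin_glb; lra|lra]|].
    intros u Hu. destruct (Rle_lt_dec u s); [apply Hupto; lra|apply Hafter; lra]. }
  pose proof (Hub _ Htau). pose proof (Rmin_glb_lt (s + d) t s ltac:(lra) Hlt). lra.
Qed.

Definition lipschitz_on_nonneg (L : R) (h : R -> R) : Prop :=
  forall u v, 0 <= u <= v -> Rabs (h v - h u) <= L * (v - u).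

Section Lipschitz.
Variables (L : R) (h : R -> R).
Hypothesis hL : lipschitz_on_nonneg L h.

Lemma lipschitz_const_ge0 : 0 <= L.
Proof. pose proof (hL 0 1 ltac:(lra)). pose proof (Rabs_pos (h 1 - h 0)). lra. Qed.

Lemma lipschitz_abs u v : 0 <= u -> 0 <= v -> Rabs (h v - h u) <= L * Rabs (v - u).
Proof.
  intros Hu Hv. destruct (Rle_dec u v).
  - rewrite (Rabs_right (v - u)) by lra. apply hL; lra.
  - rewrite Rabs_minus_sym, (Rabs_minus_sym v u), (Rabs_right (u - v)) by lra.
    apply hL; lra.
Qed.

Lemma lipschitz_continuity_pt s : 0 < s -> continuity_pt h s.
Proof.
  intros Hs eps Heps. pose proof lipschitz_const_ge0.
  exists (Rmin s (eps / (L + 1))).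
  split; [apply Rmin_glb_lt; [lra|apply Rdiv_lt_0_compat; lra]|].
  intros x [_ Hx]. simpl in *. unfold R_dist in *.
  pose proof (Rlt_le_trans _ _ _ Hx (Rmin_l _ _)) as Hxs.
  pose proof (Rlt_le_trans _ _ _ Hx (Rmin_r _ _)) as Hxe.
  pose proof (Rabs_pos (x - s)).
  apply (Rmult_lt_compat_l (L + 1)) in Hxe; [|lra].
  replace ((L + 1) * (eps / (L + 1))) with eps in Hxe by (field; lra).
  assert (0 <= x) by (pose proof (Rle_abs (s - x)); rewrite Rabs_minus_sym in Hxs; lra).
  pose proof (lipschitz_abs s x ltac:(lra) ltac:(lra)). nra.
Qed.

Lemma lipschitz_le_of_left s y : 0 < s -> (forall u, 0 <= u < s -> h u <= y) -> h s <= y.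
Proof.
  intros Hs Hleft. pose proof lipschitz_const_ge0. apply Rle_plus_epsilon. intros eps Heps.
  set (d := Rmin s (eps / (L + 1))).
  assert (Hd : 0 < d) by (apply Rmin_glb_lt; [lra|apply Rdiv_lt_0_compat; lra]).
  assert (HdL : d * (L + 1) <= eps).
  { assert (Hde : d <= eps / (L + 1)) by apply Rmin_r.
    apply (Rmult_le_compat_r (L + 1)) in Hde; [|lra].
    replace (eps / (L + 1) * (L + 1)) with eps in Hde by (field; lra). exact Hde. }
  assert (Hds : d <= s) by apply Rmin_l.
  pose proof (hL (s - d) s ltac:(lra)).
  pose proof (Rle_abs (h s - h (s - d))).
  pose proof (Hleft (s - d) ltac:(lra)). nra.
Qed.

Lemma lipschitz_eventually_le s y : 0 <= s -> h s < y -> eventually_right s (fun u => h u <= y).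
Proof.
  intros Hs Hy. pose proof lipschitz_const_ge0.
  exists ((y - h s) / (L + 1)). split; [apply Rdiv_lt_0_compat; lra|].
  intros u Hu.
  assert (Hd : (u - s) * (L + 1) <= y - h s).
  { destruct Hu as [_ Hu]. apply (Rmult_le_compat_r (L + 1)) in Hu; [|lra].
    replace ((s + (y - h s) / (L + 1)) * (L + 1)) with (s * (L + 1) + (y - h s)) in Hu
      by (field; lra). nra. }
  pose proof (hL s u ltac:(lra)). pose proof (Rle_abs (h u - h s)). nra.
Qed.

End Lipschitz.

Lemma lipschitz_on_nonneg_minus L1 L2 f g :
  lipschitz_on_nonneg L1 f -> lipschitz_on_nonneg L2 g ->
  lipschitz_on_nonneg (L1 + L2) (fun u => f u - g u).
Proof.
  intros Hf Hg u v Huv.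
  pose proof (Hf u v Huv). pose proof (Hg u v Huv).
  pose proof (Rabs_triang (f v - f u) (- (g v - g u))). rewrite Rabs_Ropp in *.
  replace (f v - g v - (f u - g u)) with (f v - f u + - (g v - g u)) by ring. lra.
Qed.

Lemma continuity_pt_eventually_nonpos g s :
  continuity_pt g s -> g s < 0 -> eventually_right s (fun u => g u <= 0).
Proof.
  intros Hg Hneg. destruct (Hg (- g s) ltac:(lra)) as [d [Hd Hclose]].
  exists (d / 2). split; [lra|]. intros u Hu.
  destruct (Req_dec u s) as [->|Hus]; [lra|].
  assert (Hdist : R_dist u s < d) by (unfold R_dist; rewrite Rabs_right; lra).
  specialize (Hclose u (conj (conj I (not_eq_sym Hus)) Hdist)). simpl in Hclose.
  unfold R_dist in Hclose. pose proof (Rle_abs (g u - g s)). lra.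
Qed.

Definition holds_off (T : R) (l : list R) (P : R -> Prop) : Prop :=
  forall u, 0 <= u <= T -> ~ In u l -> P u.

Lemma holds_off_and T l1 l2 P Q :
  holds_off T l1 P -> holds_off T l2 Q -> holds_off T (l1 ++ l2) (fun u => P u /\ Q u).
Proof.
  intros HP HQ u Hu Hn. split; [apply HP|apply HQ]; try exact Hu;
    intros Hin; apply Hn, in_or_app; auto.
Qed.

Lemma holds_off_forall n T (P : nat -> R -> Prop) :
  (forall i, (i < n)%nat -> exists l, holds_off T l (P i)) ->
  exists l, holds_off T l (fun u => forall i, (i < n)%nat -> P i u).
Proof.
  induction n as [|n IH]; intros HP.
  - exists nil. intros u _ _ i Hi. lia.
  - destruct IH as [l Hl]; [intros; apply HP; lia|].
    destruct (HP n ltac:(lia)) as [l' Hl'].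
    exists (l ++ l'). intros u Hu Hn i Hi.
    destruct (holds_off_and T l l' _ _ Hl Hl' u Hu Hn) as [Hbelow Hlast].
    destruct (Nat.eq_dec i n) as [->|]; [exact Hlast|apply Hbelow; lia].
Qed.

Lemma exists_between_not_In (l : list R) a b : a < b -> exists y, a < y < b /\ ~ In y l.
Proof.
  revert a b. induction l as [|x l IH]; intros a b Hab.
  - exists ((a + b) / 2). split; [lra|auto].
  - destruct (Rlt_le_dec a x) as [Hax|Hxa]; [destruct (Rlt_le_dec x b) as [Hxb|Hbx]|].
    + destruct (IH a x Hax) as [y [Hy Hn]]. exists y. split; [lra|]. intros [E|E]; [lra|auto].
    + destruct (IH a b Hab) as [y [Hy Hn]]. exists y. split; [lra|]. intros [E|E]; [lra|auto].
    + destruct (IH a b Hab) as [y [Hy Hn]]. exists y. split; [lra|]. intros [E|E]; [lra|auto].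
Qed.

Lemma bounded_on_nonneg_plus f g :
  bounded_on_nonneg f -> bounded_on_nonneg g -> bounded_on_nonneg (fun t => f t + g t).
Proof.
  intros [M HM] [N HN]. exists (M + N). intros t Ht.
  pose proof (Rabs_triang (f t) (g t)). pose proof (HM t Ht). pose proof (HN t Ht). lra.
Qed.

Lemma bounded_on_nonneg_rsum n (F : nat -> R -> R) :
  (forall j, (j < n)%nat -> bounded_on_nonneg (F j)) ->
  bounded_on_nonneg (fun t => rsum n (fun j => F j t)).
Proof.
  induction n as [|n IH]; intros HF; simpl.
  - exists 0. intros. rewrite Rabs_R0. lra.
  - apply (bounded_on_nonneg_plus (fun t => rsum n (fun j => F j t)) (F n)).
    + apply IH. intros; apply HF; lia.
    + apply HF; lia.
Qed.

Lemma bounded_on_nonneg_mul_sin f g :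
  bounded_on_nonneg f -> bounded_on_nonneg (fun t => f t * sin (g t)).
Proof.
  intros [M HM]. exists M. intros t Ht. rewrite Rabs_mult.
  pose proof (HM t Ht). pose proof (Rabs_pos (f t)).
  assert (Rabs (sin (g t)) <= 1) by (apply Rabs_le; apply SIN_bound).
  pose proof (Rabs_pos (sin (g t))). nra.
Qed.

Lemma RiemannInt_le_const f s u c (pr : Riemann_integrable f s u) :
  s <= u -> (forall x, s < x < u -> f x <= c) -> RiemannInt pr <= c * (u - s).
Proof.
  intros Hsu Hf. rewrite <- (RiemannInt_P15 (RiemannInt_P14 s u c)).
  apply RiemannInt_P19; assumption.
Qed.

Lemma RiemannInt_ge_const f s u c (pr : Riemann_integrable f s u) :
  s <= u -> (forall x, s < x < u -> c <= f x) -> c * (u - s) <= RiemannInt pr.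
Proof.
  intros Hsu Hf. rewrite <- (RiemannInt_P15 (RiemannInt_P14 s u c)).
  apply RiemannInt_P19; assumption.
Qed.

Section Solution.
Variables (m : nat) (omega : nat -> R -> R) (a : nat -> nat -> R -> R) (theta : nat -> R -> R).
Hypothesis Hsol : is_solution m omega a theta.

Notation rhs := (tvkr_rhs m omega a theta).

Lemma solution_increment k s u : (k < m)%nat -> 0 <= s <= u ->
  exists pr : Riemann_integrable (rhs k) s u, theta k u - theta k s = RiemannInt pr.
Proof.
  intros Hk Hsu.
  destruct (Hsol k Hk u ltac:(lra)) as [pru Eu].
  destruct (Hsol k Hk s ltac:(lra)) as [prs Es].
  exists (RiemannInt_P23 pru Hsu).
  pose proof (RiemannInt_P26 (RiemannInt_P22 pru Hsu) (RiemannInt_P23 pru Hsu) pru) as Hsplit.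
  rewrite (RiemannInt_P5 (RiemannInt_P22 pru Hsu) prs) in Hsplit. lra.
Qed.

Lemma solution_lipschitz k B : (k < m)%nat -> (forall x, 0 <= x -> Rabs (rhs k x) <= B) ->
  lipschitz_on_nonneg B (theta k).
Proof.
  intros Hk HB s u Hsu.
  destruct (solution_increment k s u Hk Hsu) as [pr ->].
  apply Rabs_le. split.
  - replace (- (B * (u - s))) with (- B * (u - s)) by ring.
    apply RiemannInt_ge_const; [lra|]. intros x Hx.
    pose proof (HB x ltac:(lra)). pose proof (Rle_abs (- rhs k x)). rewrite Rabs_Ropp in *. lra.
  - apply RiemannInt_le_const; [lra|]. intros x Hx.
    pose proof (HB x ltac:(lra)). pose proof (Rle_abs (rhs k x)). lra.
Qed.

Lemma solution_pd_nonincreasing k l s u : (k < m)%nat -> (l < m)%nat -> 0 <= s <= u ->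
  (forall x, s < x < u -> rhs k x - rhs l x <= 0) ->
  theta k u - theta l u <= theta k s - theta l s.
Proof.
  intros Hk Hl Hsu Hgap.
  destruct (solution_increment k s u Hk Hsu) as [prk Ek].
  destruct (solution_increment l s u Hl Hsu) as [prl El].
  pose proof (RiemannInt_P13 prk prl (RiemannInt_P10 (-1) prk prl)) as Hdiff.
  assert (RiemannInt (RiemannInt_P10 (-1) prk prl) <= 0 * (u - s)).
  { apply RiemannInt_le_const; [lra|]. intros x Hx. pose proof (Hgap x Hx). lra. }
  lra.
Qed.

Lemma tvkr_rhs_bounded k :
  bounded_on_nonneg (omega k) -> (forall j, (j < m)%nat -> bounded_on_nonneg (a k j)) ->
  bounded_on_nonneg (rhs k).
Proof.
  intros Homega Ha. apply (bounded_on_nonneg_plus (omega k)); [exact Homega|].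
  apply (bounded_on_nonneg_rsum m (fun j t => a k j t * sin (theta j t - theta k t))).
  intros j Hj. apply bounded_on_nonneg_mul_sin, Ha, Hj.
Qed.

Lemma tvkr_rhs_continuity_pt k s : (k < m)%nat ->
  continuity_pt (omega k) s -> (forall j, (j < m)%nat -> continuity_pt (a k j) s) ->
  (forall j, (j < m)%nat -> continuity_pt (theta j) s) -> continuity_pt (rhs k) s.
Proof.
  intros Hk Homega Ha Htheta. unfold tvkr_rhs.
  apply (continuity_pt_plus (omega k)); [exact Homega|].
  apply (rsum_continuity_pt m (fun j t => a k j t * sin (theta j t - theta k t))).
  intros j Hj. apply continuity_pt_mult; [apply Ha, Hj|].
  apply (continuity_pt_comp (fun t => theta j t - theta k t) sin); [|apply continuity_sin].
  apply continuity_pt_minus; apply Htheta; assumption.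
Qed.

Hypothesis Homega_bd : forall i, (i < m)%nat -> bounded_on_nonneg (omega i).
Hypothesis Ha_bd : forall i j, (i < m)%nat -> (j < m)%nat -> bounded_on_nonneg (a i j).

Lemma theta_lipschitz k : (k < m)%nat -> exists L, lipschitz_on_nonneg L (theta k).
Proof.
  intros Hk.
  destruct (tvkr_rhs_bounded k (Homega_bd k Hk) (fun j Hj => Ha_bd k j Hk Hj)) as [B HB].
  exists B. exact (solution_lipschitz k B Hk HB).
Qed.

Lemma pd_lipschitz k l : (k < m)%nat -> (l < m)%nat ->
  exists L, lipschitz_on_nonneg L (fun u => theta k u - theta l u).
Proof.
  intros Hk Hl.
  destruct (theta_lipschitz k Hk) as [Lk HLk], (theta_lipschitz l Hl) as [Ll HLl].
  exists (Lk + Ll). exact (lipschitz_on_nonneg_minus _ _ _ _ HLk HLl).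
Qed.

Variable r : R.
Hypothesis Ha_diag : forall i t, (i < m)%nat -> a i i t = 0.
Hypothesis Hcond : forall i j t, (i < m)%nat -> (j < m)%nat -> i <> j -> 0 <= t ->
  omega i t - omega j t - (a i j t + a j i t) * sin r
  - rsum m (fun k => nonlam_term a i j k t) * sin r
  - rsum m (fun k => lam_term a i j k t) * sin r < 0.

Lemma omega_gap_lt_coupling i j t : (i < m)%nat -> (j < m)%nat -> i <> j -> 0 <= t ->
  omega i t - omega j t < coupling m a i j t * sin r.
Proof.
  intros Hi Hj Hij Ht. pose proof (Hcond i j t Hi Hj Hij Ht).
  unfold coupling. lra.
Qed.

Definition pds_le (y u : R) : Prop :=
  forall k, (k < m)%nat -> forall l, (l < m)%nat -> theta k u - theta l u <= y.

(* The hypothesis applied to both orders of the pair forces the coupling to be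
   positive, so raising [sin r] to [sin y] only strengthens it. *)
Lemma rhs_gap_neg_at_contact k l s y : (k < m)%nat -> (l < m)%nat -> k <> l -> 0 <= s ->
  0 <= r <= y -> y <= PI / 2 -> pds_le y s -> theta k s - theta l s = y ->
  rhs k s - rhs l s < 0.
Proof.
  intros Hk Hl Hkl Hs Hry Hy Hpds Hcontact.
  pose proof (omega_gap_lt_coupling k l s Hk Hl Hkl Hs) as Hkl_gap.
  pose proof (omega_gap_lt_coupling l k s Hl Hk (not_eq_sym Hkl) Hs) as Hlk_gap.
  rewrite <- coupling_sym in Hlk_gap.
  destruct (sin_le_on_quarter r y Hry Hy) as [Hsr Hsry].
  assert (Hc : 0 < coupling m a k l s) by nra.
  assert (Hinteraction := interaction_gap_le m a (fun j => theta j s) k l s y Hk Hl Hkl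
    (Ha_diag k s Hk) (Ha_diag l s Hl) ltac:(lra) Hcontact
    (fun j Hj => conj (Hpds k Hk j Hj) (Hpds j Hj l Hl))).
  unfold tvkr_rhs. simpl in Hinteraction. nra.
Qed.

Definition coefficients_continuous_at (s : R) : Prop :=
  forall k, (k < m)%nat ->
    continuity_pt (omega k) s /\ forall j, (j < m)%nat -> continuity_pt (a k j) s.

Definition pd_values (l : list R) : list R :=
  flat_map (fun u => flat_map (fun k => map (fun j => theta k u - theta j u) (seq 0 m))
                              (seq 0 m)) l.

Lemma in_pd_values l u k j : In u l -> (k < m)%nat -> (j < m)%nat ->
  In (theta k u - theta j u) (pd_values l).
Proof.
  intros Hu Hk Hj. apply in_flat_map. exists u. split; [exact Hu|].
  apply in_flat_map. exists k. split; [apply in_seq; lia|].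
  apply in_map_iff. exists j. split; [reflexivity|apply in_seq; lia].
Qed.

Lemma pds_le_closed y s : 0 < s -> (forall u, 0 <= u < s -> pds_le y u) -> pds_le y s.
Proof.
  intros Hs Hleft k Hk l Hl. destruct (pd_lipschitz k l Hk Hl) as [L HL].
  apply (lipschitz_le_of_left L _ HL s y Hs). intros u Hu. apply Hleft; assumption.
Qed.

Lemma pd_eventually_le_at_contact k l s y : (k < m)%nat -> (l < m)%nat -> 0 < s ->
  coefficients_continuous_at s -> 0 <= r < y -> y <= PI / 2 ->
  pds_le y s -> theta k s - theta l s = y ->
  eventually_right s (fun u => theta k u - theta l u <= y).
Proof.
  intros Hk Hl Hs Hcoef Hry Hy Hpds Hcontact.
  assert (Hkl : k <> l).
  { intros <-. replace (theta k s - theta k s) with 0 in Hcontact by ring. lra. }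
  assert (Htheta : forall j, (j < m)%nat -> continuity_pt (theta j) s).
  { intros j Hj. destruct (theta_lipschitz j Hj) as [L HL].
    exact (lipschitz_continuity_pt L _ HL s Hs). }
  assert (Hgap : continuity_pt (fun x => rhs k x - rhs l x) s).
  { destruct (Hcoef k Hk), (Hcoef l Hl).
    apply continuity_pt_minus; apply tvkr_rhs_continuity_pt; assumption. }
  destruct (continuity_pt_eventually_nonpos _ s Hgap
    (rhs_gap_neg_at_contact k l s y Hk Hl Hkl ltac:(lra) ltac:(lra) Hy Hpds Hcontact))
    as [d [Hd Hnonpos]].
  exists d. split; [exact Hd|]. intros u Hu. rewrite <- Hcontact.
  apply solution_pd_nonincreasing; [assumption|assumption|lra|].
  intros x Hx. apply Hnonpos. lra.
Qed.

(* [y] avoids every phase difference taken at an exceptional time, so a pair can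
   only reach [y] at a time where all coefficients are continuous. *)
Lemma pds_le_open t y L s : 0 <= s <= t -> holds_off t L coefficients_continuous_at ->
  ~ In y (pd_values L) -> 0 <= r < y -> y <= PI / 2 -> pds_le r 0 -> pds_le y s ->
  eventually_right s (pds_le y).
Proof.
  intros Hst HL HyL Hry Hy Hinit Hpds.
  apply (eventually_right_forall m s
    (fun k u => forall l, (l < m)%nat -> theta k u - theta l u <= y)).
  intros k Hk.
  apply (eventually_right_forall m s (fun l u => theta k u - theta l u <= y)).
  intros l Hl.
  destruct (Rle_lt_or_eq_dec _ _ (Hpds k Hk l Hl)) as [Hlt|Hcontact].
  - destruct (pd_lipschitz k l Hk Hl) as [Lkl HLkl].
    apply (lipschitz_eventually_le Lkl _ HLkl); lra.
  - assert (Hs : 0 < s).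
    { destruct (Req_dec s 0) as [->|]; [|lra]. pose proof (Hinit k Hk l Hl). lra. }
    apply pd_eventually_le_at_contact; try assumption.
    apply HL; [lra|]. intros Hin. apply HyL. rewrite <- Hcontact. apply in_pd_values; assumption.
Qed.

Lemma pds_le_on t y L : 0 <= t -> holds_off t L coefficients_continuous_at ->
  ~ In y (pd_values L) -> 0 <= r < y -> y <= PI / 2 -> pds_le r 0 ->
  forall u, 0 <= u <= t -> pds_le y u.
Proof.
  intros Ht HL HyL Hry Hy Hinit.
  apply real_induction; [exact Ht| | |].
  - intros k Hk l Hl. pose proof (Hinit k Hk l Hl). lra.
  - intros s Hs Hleft. apply pds_le_closed; [lra|exact Hleft].
  - intros s Hs Hupto. apply (pds_le_open t y L); try assumption; [lra|]. apply Hupto. lra.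
Qed.

End Solution.

Lemma coefficients_holds_off m omega a T :
  (forall i, (i < m)%nat -> piecewise_continuous (omega i)) ->
  (forall i j, (i < m)%nat -> (j < m)%nat -> piecewise_continuous (a i j)) ->
  exists L, holds_off T L (coefficients_continuous_at m omega a).
Proof.
  intros Homega Ha. apply holds_off_forall. intros k Hk.
  destruct (Homega k Hk T) as [l1 H1].
  destruct (holds_off_forall m T (fun j => continuity_pt (a k j)) (fun j Hj => Ha k j Hk Hj T))
    as [l2 H2].
  exists (l1 ++ l2). exact (holds_off_and T l1 l2 _ _ H1 H2).
Qed.

Lemma pd_le_of_abs_le (x : nat -> R) m r : 0 <= r ->
  (forall i j, (j < i < m)%nat -> Rabs (x i - x j) <= r) ->
  forall k, (k < m)%nat -> forall l, (l < m)%nat -> x k - x l <= r.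
Proof.
  intros Hr Habs k Hk l Hl. destruct (Nat.lt_total k l) as [Hkl|[->|Hlk]].
  - pose proof (Habs l k ltac:(lia)) as H. rewrite Rabs_minus_sym in H.
    pose proof (Rle_abs (x k - x l)). lra.
  - lra.
  - pose proof (Habs k l ltac:(lia)). pose proof (Rle_abs (x k - x l)). lra.
Qed.

Theorem lemma1 (m : nat) (omega : nat -> R -> R) (a : nat -> nat -> R -> R) (r : R)
  (Hm : (2 <= m)%nat)
  (Homega_pc : forall i, (i < m)%nat -> piecewise_continuous (omega i))
  (Homega_bd : forall i, (i < m)%nat -> bounded_on_nonneg (omega i))
  (Ha_pc : forall i j, (i < m)%nat -> (j < m)%nat -> piecewise_continuous (a i j))
  (Ha_bd : forall i j, (i < m)%nat -> (j < m)%nat -> bounded_on_nonneg (a i j))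
  (Ha_diag : forall i t, (i < m)%nat -> a i i t = 0)
  (Hr : 0 <= r < PI / 2)
  (Hcond : forall i j t, (i < m)%nat -> (j < m)%nat -> i <> j -> 0 <= t ->
     omega i t - omega j t - (a i j t + a j i t) * sin r
     - rsum m (fun k => nonlam_term a i j k t) * sin r
     - rsum m (fun k => lam_term a i j k t) * sin r < 0) :
  invariant_Ar m omega a r.
Proof.
  intros theta Hsol H0 t Ht i j Hij.
  assert (Hinit : pds_le m theta r 0)
    by exact (pd_le_of_abs_le (fun k => theta k 0) m r ltac:(lra) H0).
  assert (Hpds : pds_le m theta r t).
  { intros p Hp q Hq. apply Rnot_lt_le. intros Hgt.
    destruct (coefficients_holds_off m omega a t Homega_pc Ha_pc) as [L HL].
    destruct (exists_between_not_In (pd_values m theta L) r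
                (Rmin (theta p t - theta q t) (PI / 2))) as [y [Hy HyL]].
    { apply Rmin_glb_lt; lra. }
    pose proof (Rmin_l (theta p t - theta q t) (PI / 2)).
    pose proof (Rmin_r (theta p t - theta q t) (PI / 2)).
    pose proof (pds_le_on m omega a theta Hsol Homega_bd Ha_bd r Ha_diag Hcond t y L
                  Ht HL HyL ltac:(lra) ltac:(lra) Hinit t ltac:(lra) p Hp q Hq).
    lra. }
  apply Rabs_le. pose proof (Hpds i ltac:(lia) j ltac:(lia)).
  pose proof (Hpds j ltac:(lia) i ltac:(lia)). lra.
Qed.
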